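(* With $A_2[n]$ defined below, for $n=1,2,\dots$, $$A_2[n]=\frac{n+1}{128}\binom{3n+1}{n}\Bigl(\frac{168n^3+846n^2+1211n+510}{5}-3(n+1)(25n+34)\,F(1,-n;2n+2;-2)\Bigr),$$ where $F(a,b;c;z)$ is the Gauss hypergeometric function.
   Context: $A_0(z)$ is the unique function holomorphic near $z=0$ with $A_0(0)=0$ and $z(1+A_0(z))^3=A_0(z)$, and $$A_2(z)=A_0(z)\frac{(1+A_0(z))^6}{(1-2A_0(z))^9}\bigl(1+36A_0(z)+135A_0^2(z)+19A_0^3(z)\bigr).$$ The numbers $A_2[n]$ are defined by $A_2(z)=\sum_{n\ge1}A_2[n]z^n$. *)

(* Formal power series are handled through their
   coefficient sequences (nat -> R) and polynomial truncations. *)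
From HB Require Import structures.
From mathcomp Require Import all_boot all_order all_algebra.
Set Implicit Arguments. Unset Strict Implicit. Unset Printing Implicit Defensive.
Import Order.TTheory GRing.Theory Num.Theory.
Local Open Scope ring_scope.

Definition trunc_ps (R : nzRingType) (a : nat -> R) (N : nat) : {poly R} :=
  \poly_(i < N.+1) a i.

Definition eq_modX (R : nzRingType) (p q : {poly R}) (N : nat) : Prop :=
  forall i : nat, (i <= N)%N -> p`_i = q`_i.

(* a is the coefficient sequence of A_0: A_0(0) = 0 and z (1 + A_0)^3 = A_0
   as formal power series (equality checked modulo every z^(N+1)). *)
Definition is_A0 (R : nzRingType) (a : nat -> R) : Prop :=
  a 0%N = 0 /\
  forall N : nat,
    eq_modX ('X * (1 + trunc_ps a N) ^+ 3) (trunc_ps a N) N.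

(* b is the coefficient sequence of
   A_2 = A_0 (1+A_0)^6 (1-2A_0)^(-9) (1 + 36 A_0 + 135 A_0^2 + 19 A_0^3),
   i.e. (1 - 2A_0)^9 * A_2 = A_0 (1+A_0)^6 (1 + 36A_0 + 135A_0^2 + 19A_0^3)
   as formal power series ((1-2A_0)^9 is invertible since A_0(0) = 0). *)
Definition is_A2 (R : nzRingType) (a b : nat -> R) : Prop :=
  forall N : nat,
    let A := trunc_ps a N in
    eq_modX ((1 - 2%:R * A) ^+ 9 * trunc_ps b N)
            (A * (1 + A) ^+ 6 * (1 + 36%:R * A + 135%:R * A ^+ 2 + 19%:R * A ^+ 3))
            N.

Definition poch (R : nzRingType) (x : R) (k : nat) : R :=
  \prod_(i < k) (x + i%:R).

(* Gauss hypergeometric function F(a, -m; c; z) for a nonnegative integer m: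
   the series sum_k (a)_k (-m)_k / ((c)_k k!) z^k terminates, all terms with
   k > m vanishing since (-m)_k = 0. *)
Definition hyp2F1_negint (R : fieldType) (a : R) (m : nat) (c z : R) : R :=
  \sum_(k < m.+1) poch a k * poch (- (m%:R)) k / (poch c k * (k`!)%:R) * z ^+ k.

From HB Require Import structures.
From mathcomp Require Import all_boot all_order all_algebra.
From mathcomp Require Import zify ring.

(* Put y = 1 - 2 A_0 and W = 1 / y, and let D = 2 z d/dz.  Differentiating
   z (1 + A_0)^3 = A_0 gives D W = W (W - 1) (3 W - 1), so D acts on the
   Laurent polynomials in W, a ring in which 2 A_0 = 1 - 1/W.  The series
   U = (1 + A_0)^2 W and V = U W satisfy first-order linear differential
   equations whose coefficient recurrences are those of C(3n+1, n) and of
   S_n = sum_k 2^k C(3n+1, n-k); having the same constant terms, they are the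
   generating functions of these numbers.  A_2 is a linear combination of
   D^k U (k <= 4) and D^k V (k <= 3): an identity between Laurent polynomials
   in W.  Reading off the coefficient of z^n and writing
   S_n = C(3n+1, n) F(1, -n; 2n+2; -2) gives the formula.  Power series are
   handled in the quotient ring R[z] / (z^(n+1)). *)

Set Implicit Arguments.
Unset Strict Implicit.
Unset Printing Implicit Defensive.

(** * Binomial sums *)

Lemma mul_bin_3n1 j :
  2 * j.+1 * (2 * j + 3) * 'C(3 * j + 4, j.+1)
  = 3 * (3 * j + 2) * (3 * j + 4) * 'C(3 * j + 1, j).
Proof.
have e4 : j.+1 * 'C(3 * j + 4, j.+1) = (3 * j + 4) * 'C(3 * j + 3, j).
  by rewrite -mul_bin_diag addnS.
have e3 : (2 * j + 3) * 'C(3 * j + 3, j) = (3 * j + 3) * 'C(3 * j + 2, j).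
  by rewrite (_ : 2 * j + 3 = 3 * j + 3 - j) ?addnS -?mul_bin_down //; lia.
have e2 : (2 * j + 2) * 'C(3 * j + 2, j) = (3 * j + 2) * 'C(3 * j + 1, j).
  by rewrite (_ : 2 * j + 2 = 3 * j + 2 - j) ?addnS -?mul_bin_down //; lia.
transitivity (2 * (2 * j + 3) * (j.+1 * 'C(3 * j + 4, j.+1))); first by ring.
rewrite e4; transitivity (2 * (3 * j + 4) * ((2 * j + 3) * 'C(3 * j + 3, j))).
  by ring.
rewrite e3; transitivity (3 * (3 * j + 4) * ((2 * j + 2) * 'C(3 * j + 2, j))).
  by ring.
by rewrite e2; ring.
Qed.

Definition binom_geom (M j : nat) := \sum_(k < j.+1) 2 ^ k * 'C(M, j - k).

Lemma binom_geom0 M : binom_geom M 0 = 1.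
Proof. by rewrite /binom_geom big_ord_recl big_ord0 bin0. Qed.

Lemma binom_geomS M j : binom_geom M j.+1 = 'C(M, j.+1) + 2 * binom_geom M j.
Proof.
rewrite /binom_geom big_ord_recl subn0 expn0 mul1n big_distrr; congr (_ + _).
by apply: eq_bigr => i _; rewrite lift0 subSS expnS -mulnA.
Qed.

Lemma binom_geom_addS M j :
  binom_geom M.+1 j.+1 = binom_geom M j.+1 + binom_geom M j.
Proof.
rewrite /binom_geom big_ord_recr [in RHS]big_ord_recr /= !subnn !bin0 addnAC.
rewrite -big_split; congr (_ + _); apply: eq_bigr => -[i /= leij] _.
by rewrite subSn // binS mulnDr.
Qed.

Definition binom_geom3 n := binom_geom (3 * n + 1) n.

Lemma binom_geom3_rec n :
  n.+1 * 4 * binom_geom3 n.+1 + 3 * 'C(3 * n + 1, n)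
  = n.+1 * 27 * binom_geom3 n.
Proof.
case: n => [|[|m]]; rewrite /binom_geom3; try by rewrite !binom_geomS !binom_geom0.
have -> : 3 * m.+3 + 1 = (3 * m.+2 + 1).+3 by lia.
move defM : (3 * m.+2 + 1) => M.
rewrite !binom_geom_addS !binom_geomS.
have h3 := mul_bin_left M m.+2; have h2 := mul_bin_left M m.+1.
rewrite (_ : M - m.+2 = 2 * m + 5) in h3; last by lia.
rewrite (_ : M - m.+1 = 2 * m + 6) in h2; last by lia.
move: h2 h3; set c3 := 'C(M, m.+3); set c2 := 'C(M, m.+2); set c1 := 'C(M, m.+1).
set g := binom_geom M m => h2 h3.
transitivity
  (4 * (m.+3 * c3) + (20 * m + 63) * c2 + 52 * (m + 3) * c1 + 108 * (m + 3) * g).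
  by ring.
rewrite h3; transitivity
  ((27 * m + 81) * c2 + 52 * (m + 3) * c1 + 108 * (m + 3) * g + m.+2 * c2).
  by ring.
by rewrite h2; ring.
Qed.

Import Order.TTheory GRing.Theory Num.Theory.
Local Open Scope ring_scope.

(** * Pochhammer symbols *)

Section Hypergeometric.
Variable R : numFieldType.

Lemma pochS (x : R) k : poch x k.+1 = poch x k * (x + k%:R).
Proof. by rewrite /poch big_ord_recr. Qed.

Lemma poch_natS m k : poch (m.+1%:R : R) k * (m`!)%:R = ((m + k)`!)%:R.
Proof.
elim: k => [|k IH]; first by rewrite /poch big_ord0 mul1r addn0.
by rewrite pochS mulrAC IH addnS factS natrM mulrC -natrD addSn.
Qed.

Lemma poch_oppn n k : (k <= n)%N ->
  poch (- (n%:R : R)) k * ((n - k)`!)%:R = (-1) ^+ k * (n`!)%:R.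
Proof.
elim: k => [|k IH] lekn; first by rewrite /poch big_ord0 subn0 expr0 !mul1r.
have e : (n - k = (n - k.+1).+1)%N by lia.
move: (IH (ltnW lekn)); rewrite e factS natrM => IHk.
rewrite pochS exprS -[in RHS]mulrA -IHk.
have -> : (- n%:R + k%:R : R) = - ((n - k.+1).+1)%:R.
  by rewrite -e natrB 1?ltnW // opprB addrC.
ring.
Qed.

Lemma fact_neq0 m : ((m`!)%:R : R) != 0.
Proof. by rewrite pnatr_eq0 -lt0n fact_gt0. Qed.

Lemma natr_bin m n : (m <= n)%N ->
  ('C(n, m))%:R = (n`!)%:R / ((m`!)%:R * ((n - m)`!)%:R) :> R.
Proof.
by move=> lemn; rewrite -(bin_fact lemn) !natrM mulfK // mulf_neq0 ?fact_neq0.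
Qed.

Lemma hyp2F1_binom n :
  hyp2F1_negint 1 n (2%:R * n%:R + 2%:R) (- 2%:R) * ('C(3 * n + 1, n))%:R
  = (binom_geom3 n)%:R :> R.
Proof.
rewrite /hyp2F1_negint /binom_geom3 /binom_geom natr_sum mulr_suml.
apply: eq_bigr => -[k /= ltkn] _; have lekn : (k <= n)%N by [].
have p1 : poch (1 : R) k = (k`!)%:R by move: (poch_natS 0 k); rewrite fact0 mulr1.
have pc : poch (2%:R * n%:R + 2%:R : R) k
          = ((2 * n + 1 + k)`!)%:R / ((2 * n + 1)`!)%:R.
  by rewrite -(poch_natS (2 * n + 1) k) mulfK ?fact_neq0 // -addnS natrD natrM.
have pn : poch (- (n%:R : R)) k = (-1) ^+ k * (n`!)%:R / ((n - k)`!)%:R.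
  by rewrite -(poch_oppn lekn) mulfK ?fact_neq0.
rewrite p1 pc pn natrM natrX !natr_bin; try lia.
rewrite (_ : 3 * n + 1 - n = 2 * n + 1)%N; last by lia.
rewrite (_ : 3 * n + 1 - (n - k) = 2 * n + 1 + k)%N; last by lia.
have -> : (2%:R : R) ^+ k = (-1) ^+ k * (- 2%:R) ^+ k.
  by rewrite -exprMn mulN1r opprK.
by field; rewrite !fact_neq0.
Qed.

End Hypergeometric.

(** * A derivation on Laurent polynomials *)

(* Below, D is twice the Euler operator and y = 1 - 2 A_0, w = 1 / y.  With
   this normalisation all the relations have integer coefficients and
   w * y = 1 has a monic monomial left-hand side, which ring can use as a
   rewrite rule; x stands for z. *)
Section Derivation.
Variables (S : comNzRingType) (D : {additive S -> S}).
Hypothesis D_mul : forall y z, D (y * z) = D y * z + y * D z.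

Lemma derivation1 : D 1 = 0.
Proof.
have := D_mul 1 1; rewrite !mulr1 mul1r => h.
by apply: (addrI (D 1)); rewrite /= addr0 -h.
Qed.

Lemma derivation_nat n : D n%:R = 0.
Proof. by rewrite raddfMn derivation1 mul0rn. Qed.

Lemma derivation_natM n y : D (n%:R * y) = n%:R * D y.
Proof. by rewrite D_mul derivation_nat mul0r add0r. Qed.

Lemma derivation_exp y n : D (y ^+ n.+1) = y ^+ n * D y *+ n.+1.
Proof.
elim: n => [|n IH]; first by rewrite expr0 mul1r expr1.
by rewrite exprS D_mul IH mulrnAr mulrA -exprS mulrS [D y * _]mulrC -!mulrS.
Qed.

Variables x y w : S.
Hypothesis wy : w * y = 1.
Hypothesis x_rel : x * (3 - y) ^+ 3 = 4 * (1 - y).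
Hypothesis Dx : D x = 2 * x.
Hypothesis lreg8 : GRing.lreg (8 : S).
Hypothesis lreg3y : GRing.lreg (3 - y).

Lemma Dy : D y = 4 - 3 * w - y.
Proof.
have E1 : 2 * x * (3 - y) ^+ 3 - 3 * x * (3 - y) ^+ 2 * D y + 4 * D y = 0.
  have := congr1 D x_rel.
  rewrite D_mul derivation_natM derivation_exp Dx !raddfB derivation1 derivation_nat.
  by move/eqP; rewrite -subr_eq0 => /eqP h; rewrite -[RHS]h; ring.
have E2 : x * (3 - y) ^+ 3 - 4 * (1 - y) = 0 by rewrite x_rel subrr.
apply: lreg8.
have -> : 8 * D y
  = w * ((3 - y) * (2 * x * (3 - y) ^+ 3 - 3 * x * (3 - y) ^+ 2 * D y + 4 * D y)
         - (2 * (3 - y) - 3 * D y) * (x * (3 - y) ^+ 3 - 4 * (1 - y)))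
    + 8 * (4 - 3 * w - y).
  by ring: wy.
by rewrite E1 E2 !mulr0 subrr mulr0 add0r.
Qed.

Lemma Dw : D w = 3 * w ^+ 3 - 4 * w ^+ 2 + w.
Proof.
have : D w * y = - (w * D y) by apply/eqP; rewrite -addr_eq0 -D_mul wy derivation1.
rewrite Dy => h.
transitivity (D w * (w * y)); first by rewrite wy mulr1.
transitivity (- (w * (4 - 3 * w - y)) * w); last by ring: wy.
by rewrite mulrCA h; ring.
Qed.

(* gfU and gfV stand for 4 U and 4 V. *)
Definition gfU := (3 - y) ^+ 2 * w.
Definition gfV := gfU * w.

Lemma gfUE : gfU = 9 * w - 6 + y.
Proof. by rewrite /gfU; ring: wy. Qed.

Lemma gfVE : gfV = 9 * w ^+ 2 - 6 * w + 1.
Proof. by rewrite /gfV gfUE; ring: wy. Qed.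

Local Ltac expandD :=
  rewrite !(derivation_nat, derivation1, raddfD D, raddfB D, raddfN D)
    ?derivation_natM ?derivation_exp ?Dw ?Dy.

Lemma D_gfU : D gfU = 27 * w ^+ 3 - 36 * w ^+ 2 + 6 * w + 4 - y.
Proof. by rewrite gfUE; expandD; ring: wy. Qed.

Lemma D2_gfU : D (D gfU) =
  243 * w ^+ 5 - 540 * w ^+ 4 + 387 * w ^+ 3 - 96 * w ^+ 2 + 9 * w - 4 + y.
Proof. by rewrite D_gfU; expandD; ring: wy. Qed.

Lemma D3_gfU : D (D (D gfU)) = 3645 * w ^+ 7 - 11340 * w ^+ 6 + 13338 * w ^+ 5
  - 7380 * w ^+ 4 + 1956 * w ^+ 3 - 228 * w ^+ 2 + 6 * w + 4 - y.
Proof. by rewrite D2_gfU; expandD; ring: wy. Qed.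

Lemma D_gfV : D gfV = 54 * w ^+ 4 - 90 * w ^+ 3 + 42 * w ^+ 2 - 6 * w.
Proof. by rewrite gfVE; expandD; ring: wy. Qed.

Lemma D2_gfV : D (D gfV) =
  648 * w ^+ 6 - 1674 * w ^+ 5 + 1548 * w ^+ 4 - 624 * w ^+ 3 + 108 * w ^+ 2 - 6 * w.
Proof. by rewrite D_gfV; expandD; ring: wy. Qed.

(* 640 A_2 = (510 + 1721 t + 2057 t^2 + 1014 t^3 + 168 t^4) U
            - (510 + 1395 t + 1260 t^2 + 375 t^3) V   with t = z d/dz,
   rewritten for D = 2 t and 1024 A_0 (1 + A_0)^6 = (1 - y) (3 - y)^6. *)
Lemma theta_identity :
  40 * ((1 - y) * (3 - y) ^+ 6
        * (8 + 144 * (1 - y) + 270 * (1 - y) ^+ 2 + 19 * (1 - y) ^+ 3) * w ^+ 9)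
  = 8160 * gfU + 13768 * D gfU + 8228 * D (D gfU) + 2028 * D (D (D gfU))
    + 168 * D (D (D (D gfU)))
    - (8160 * gfV + 11160 * D gfV + 5040 * D (D gfV) + 750 * D (D (D gfV))).
Proof. by rewrite D3_gfU D2_gfU D_gfU gfUE D2_gfV D_gfV gfVE; expandD; ring: wy. Qed.

Lemma theta_identity_eigen (T : comNzRingType) (phi : S -> T) (l : T) :
  {morph phi : z1 z2 / z1 + z2} -> {morph phi : z / - z} ->
  (forall z, phi (D z) = l * phi z) -> (forall c z, phi (c%:R * z) = c%:R * phi z) ->
  40 * phi ((1 - y) * (3 - y) ^+ 6
            * (8 + 144 * (1 - y) + 270 * (1 - y) ^+ 2 + 19 * (1 - y) ^+ 3) * w ^+ 9)
  = (8160 + 13768 * l + 8228 * l ^+ 2 + 2028 * l ^+ 3 + 168 * l ^+ 4) * phi gfU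
    - (8160 + 11160 * l + 5040 * l ^+ 2 + 750 * l ^+ 3) * phi gfV.
Proof.
move=> phi_add phi_opp phiD phiM.
by rewrite -phiM theta_identity !(phi_add, phi_opp, phiM, phiD); ring.
Qed.

Definition odeU (f : S) :=
  4 * D (D f) + 4 * D f - 3 * x * (9 * D (D f) + 36 * D f + 32 * f).

Definition odeV (f g : S) := (4 - 27 * x) * D f - 54 * x * f + 6 * x * g.

Lemma odeU_gfU : odeU gfU = 0.
Proof.
apply: (@lregX _ _ 3 lreg3y); rewrite /= mulr0.
have -> : (3 - y) ^+ 3 * odeU gfU = (3 - y) ^+ 3 * (4 * D (D gfU) + 4 * D gfU)
    - 3 * (x * (3 - y) ^+ 3) * (9 * D (D gfU) + 36 * D gfU + 32 * gfU).
  by rewrite /odeU; ring.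
by rewrite x_rel D2_gfU D_gfU gfUE; ring: wy.
Qed.

Lemma odeV_gfV : odeV gfV gfU = 0.
Proof.
apply: (@lregX _ _ 3 lreg3y); rewrite /= mulr0.
have -> : (3 - y) ^+ 3 * odeV gfV gfU = (3 - y) ^+ 3 * 4 * D gfV
    - (x * (3 - y) ^+ 3) * (27 * D gfV + 54 * gfV - 6 * gfU).
  by rewrite /odeV; ring.
by rewrite x_rel D_gfV gfVE gfUE; ring: wy.
Qed.

Lemma odeU_lin c f g : odeU (f - c%:R * g) = odeU f - c%:R * odeU g.
Proof. by rewrite /odeU !(raddfB D, derivation_natM); ring. Qed.

Lemma odeV_lin c f1 f2 g1 g2 :
  odeV (f1 - c%:R * f2) (g1 - c%:R * g2) = odeV f1 g1 - c%:R * odeV f2 g2.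
Proof. by rewrite /odeV !(raddfB D, derivation_natM); ring. Qed.

End Derivation.

(** * Truncated power series *)

Definition theta (R : nzRingType) (p : {poly R}) : {poly R} := 'X * p^`().

Lemma coef_theta (R : nzRingType) (p : {poly R}) i : (theta p)`_i = p`_i *+ i.
Proof. by rewrite /theta coefXM; case: i => [|i] //=; rewrite coef_deriv. Qed.

Lemma thetaM (R : comNzRingType) (p q : {poly R}) :
  theta (p * q) = theta p * q + p * theta q.
Proof. by rewrite /theta derivM; ring. Qed.

Section TruncatedSeries.
Variables (R : fieldType) (N : nat).
Local Notation Q := {poly %/ ('X^(N.+1) : {poly R})}.
Local Notation qp := (in_qpoly ('X^(N.+1) : {poly R})).
Implicit Types (p : {poly R}) (z : Q).

Lemma coef_in_qpoly p i : (i <= N)%N -> (qp p)`_i = p`_i.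
Proof.
move=> leiN; rewrite /= mk_monic_Xn /=.
have mX : ('X^(N.+1) : {poly R}) \is monic by apply: monicXn.
by rewrite {2}(Pdiv.RingMonic.rdivp_eq mX p) coefD coefMXn ltnS leiN add0r.
Qed.

Lemma coef_qpoly_gt z i : (N < i)%N -> z`_i = 0.
Proof.
move=> ltNi; apply/nth_default/(leq_trans (size_npoly z)).
by rewrite mk_monic_Xn size_polyXn.
Qed.

Lemma qpolyP z1 z2 : (forall i, (i <= N)%N -> z1`_i = z2`_i) -> z1 = z2.
Proof.
move=> e; apply: val_inj; apply/polyP => i.
by case: (leqP i N) => [/e //| ltNi]; rewrite !coef_qpoly_gt.
Qed.

Lemma in_qpolyK z : qp z = z.
Proof. by apply: qpolyP => i /coef_in_qpoly. Qed.

Lemma eq_modX_in_qpoly p q : eq_modX p q N -> qp p = qp q.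
Proof. by move=> e; apply: qpolyP => i leiN; rewrite !coef_in_qpoly // e. Qed.

Lemma coef_q0 i : (0 : Q)`_i = 0.
Proof. by rewrite raddf0 coef0. Qed.

Lemma qpoly_eq0 z : (forall i, (i <= N)%N -> z`_i = 0) -> z = 0.
Proof. by move=> z0; apply: qpolyP => i /z0 ->; rewrite coef_q0. Qed.

Lemma coef_qD z1 z2 i : (z1 + z2)`_i = z1`_i + z2`_i.
Proof. by rewrite raddfD coefD. Qed.

Lemma coef_qN z i : (- z)`_i = - z`_i.
Proof. by rewrite raddfN coefN. Qed.

Lemma coef_qB z1 z2 i : (z1 - z2)`_i = z1`_i - z2`_i.
Proof. by rewrite coef_qD coef_qN. Qed.

Lemma coef_qnatM c z i : (c%:R * z)`_i = c%:R * z`_i.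
Proof. by rewrite mulr_natl raddfMn coefMn mulr_natl. Qed.

Lemma coef_qpolyM z1 z2 i :
  (i <= N)%N -> (z1 * z2)`_i = ((z1 : {poly R}) * (z2 : {poly R}))`_i.
Proof. exact: coef_in_qpoly. Qed.

Lemma coef0_qM z1 z2 : (z1 * z2)`_0 = z1`_0 * z2`_0.
Proof. by rewrite coef_qpolyM // coef0M. Qed.

Lemma coef0_qnat k : (k%:R : Q)`_0 = k%:R.
Proof. by rewrite qpolyC_natr -polyC_natr coefC. Qed.

Lemma coef0_qX z k : (z ^+ k)`_0 = z`_0 ^+ k.
Proof.
elim: k => [|k IH]; first by rewrite !expr0 (coef0_qnat 1).
by rewrite [z ^+ _]exprS coef0_qM IH -exprS.
Qed.

Lemma coef_qXM z i : (i <= N)%N -> ('qX * z)`_i = if i is j.+1 then z`_j else 0.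
Proof.
move=> leiN; have -> : 'qX * z = qp ('X * (z : {poly R})).
  by rewrite in_qpolyM in_qpolyK.
by rewrite coef_in_qpoly // coefXM; case: i {leiN}.
Qed.

Lemma qpoly_lreg z : z`_0 != 0 -> GRing.lreg z.
Proof.
move=> z0 z1 z2 /eqP; rewrite -subr_eq0 -mulrBr => /eqP zt0; apply/eqP.
rewrite -subr_eq0; apply/eqP; apply: qpoly_eq0; elim/ltn_ind => i IH leiN.
have : (z * (z1 - z2))`_i = 0 by rewrite zt0 coef_q0.
rewrite coef_qpolyM // coefM big_ord_recl subn0 big1 ?addr0 => [/eqP|[j ltji] _].
  by rewrite mulf_eq0 (negbTE z0) => /eqP.
by rewrite /= IH ?mulr0 // ?subnSK ?leq_subr ?(leq_trans (leq_subr _ _)) // ltn_subrL.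
Qed.

Lemma qpoly_nilpotent z : z`_0 = 0 -> z ^+ N.+1 = 0.
Proof.
move=> z0; rewrite -[z]in_qpolyK -rmorphXn; apply: qpoly_eq0 => i leiN.
have -> : (z : {poly R}) = 'X * drop_poly 1 z.
  by apply/polyP => -[|j]; rewrite coefXM ?coef_drop_poly ?addn1.
by rewrite coef_in_qpoly // exprMn coefXnM ltnS leiN.
Qed.

Definition thetaQ z : Q := qp (theta z).

Lemma thetaQ_in_qpoly p : thetaQ (qp p) = qp (theta p).
Proof.
apply: qpolyP => i leiN.
by rewrite !coef_in_qpoly // !coef_theta coef_in_qpoly.
Qed.

Lemma coef_thetaQ z i : (thetaQ z)`_i = z`_i *+ i.
Proof.
case: (leqP i N) => [leiN | ltNi]; first by rewrite coef_in_qpoly // coef_theta.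
by rewrite !coef_qpoly_gt // mul0rn.
Qed.

Fact thetaQ_is_zmod_morphism : zmod_morphism thetaQ.
Proof. by move=> z1 z2; apply: qpolyP => i _; rewrite !(coef_qB, coef_thetaQ) mulrnBl. Qed.

HB.instance Definition _ :=
  GRing.isZmodMorphism.Build Q Q thetaQ thetaQ_is_zmod_morphism.

Lemma thetaQM z1 z2 : thetaQ (z1 * z2) = thetaQ z1 * z2 + z1 * thetaQ z2.
Proof.
have -> : z1 * z2 = qp ((z1 : {poly R}) * z2) by rewrite in_qpolyM !in_qpolyK.
rewrite thetaQ_in_qpoly thetaM in_qpolyD.
by congr (_ + _); rewrite in_qpolyM in_qpolyK.
Qed.

Lemma thetaQX : thetaQ 'qX = 'qX.
Proof. by rewrite thetaQ_in_qpoly /theta derivX mulr1. Qed.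

End TruncatedSeries.

Arguments coef0_qnat {R N} k.

(** * The differential equations of the binomial series *)

Section TruncatedODE.
Variables (R : numFieldType) (N : nat).
Local Notation Q := {poly %/ ('X^(N.+1) : {poly R})}.
Local Notation qp := (in_qpoly ('X^(N.+1) : {poly R})).
Local Notation DQ := (@thetaQ R N \+ @thetaQ R N).
Implicit Types (z f g : Q).

Lemma DQ_mul z1 z2 : DQ (z1 * z2) = DQ z1 * z2 + z1 * DQ z2.
Proof. by rewrite /= !thetaQM; ring. Qed.

Lemma DQ_qX : DQ 'qX = 2 * 'qX.
Proof. by rewrite /= thetaQX mulr_natl mulr2n. Qed.

Lemma coef_DQ z i : (DQ z)`_i = z`_i * (2 * i)%:R.
Proof.
by rewrite [DQ z]/= coef_qD coef_thetaQ -mulrnDr addnn -mul2n mulr_natr.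
Qed.

Lemma coef_odeU f i : (i <= N)%N ->
  (odeU DQ 'qX f)`_i = f`_i * (8 * i * (2 * i + 1))%:R
    - (if i is j.+1 then f`_j * (12 * (3 * j + 2) * (3 * j + 4))%:R else 0).
Proof.
move=> leiN; rewrite /odeU -!mulrA.
rewrite !(coef_DQ, coef_qB, coef_qD, coef_qnatM) coef_qXM //.
by case: i leiN => [|j] leiN; rewrite ?(coef_DQ, coef_qD, coef_qnatM) !natrM ?natrD; ring.
Qed.

Lemma coef_odeV f g i : (i <= N)%N ->
  (odeV DQ 'qX f g)`_i = f`_i * (8 * i)%:R
    - (if i is j.+1 then f`_j * (54 * j.+1)%:R - g`_j * 6%:R else 0).
Proof.
move=> leiN; rewrite /odeV mulrBl -!mulrA.
rewrite !(coef_DQ, coef_qB, coef_qD, coef_qnatM) !coef_qXM //.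
by case: i leiN => [|j] leiN; rewrite ?coef_DQ !natrM; ring.
Qed.

Lemma odeU_eq0 f : odeU DQ 'qX f = 0 -> f`_0 = 0 -> f = 0.
Proof.
move=> hf f0; apply: qpoly_eq0; elim=> [//|j IH] ltjN.
have := coef_odeU f ltjN; rewrite hf coef_q0 IH 1?ltnW // mul0r subr0.
by move/esym/eqP; rewrite mulf_eq0 pnatr_eq0 !muln_eq0 addn1 /= orbF => /eqP.
Qed.

Lemma odeV_eq0 f : odeV DQ 'qX f 0 = 0 -> f`_0 = 0 -> f = 0.
Proof.
move=> hf f0; apply: qpoly_eq0; elim=> [//|j IH] ltjN.
have := coef_odeV f 0 ltjN.
rewrite hf coef_q0 IH 1?ltnW // coef_q0 !mul0r !subr0.
by move/esym/eqP; rewrite mulf_eq0 pnatr_eq0 !muln_eq0 /= orbF => /eqP.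
Qed.

Definition qseries (c : nat -> R) : Q := qp (trunc_ps c N).

Lemma coef_qseries c i : (i <= N)%N -> (qseries c)`_i = c i.
Proof. by move=> leiN; rewrite coef_in_qpoly // coef_poly ltnS leiN. Qed.

Lemma odeU_binom : odeU DQ 'qX (qseries (fun i => ('C(3 * i + 1, i))%:R)) = 0.
Proof.
apply: qpoly_eq0 => -[|j] lejN; rewrite coef_odeU // coef_qseries //; first ring.
rewrite coef_qseries ?(ltnW lejN) // (_ : 3 * j.+1 + 1 = 3 * j + 4)%N; last by lia.
apply/eqP; rewrite subr_eq0 -!natrM eqr_nat; apply/eqP.
transitivity (4 * (2 * j.+1 * (2 * j + 3) * 'C(3 * j + 4, j.+1)))%N; first by ring.
by rewrite mul_bin_3n1; ring.
Qed.

Lemma odeV_binom : odeV DQ 'qX (qseries (fun i => (binom_geom3 i)%:R))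
  (qseries (fun i => ('C(3 * i + 1, i))%:R)) = 0.
Proof.
apply: qpoly_eq0 => -[|j] lejN; rewrite coef_odeV // coef_qseries //; first ring.
rewrite !coef_qseries ?(ltnW lejN) //.
transitivity (2 * (((j.+1 * 4 * binom_geom3 j.+1 + 3 * 'C(3 * j + 1, j))%N)%:R
                   - ((j.+1 * 27 * binom_geom3 j)%N)%:R) : R).
  by rewrite !natrD !natrM; ring.
by rewrite binom_geom3_rec subrr mulr0.
Qed.

End TruncatedODE.

Arguments qseries {R} N c.

(** * The coefficients of A_2 *)

Section CoefficientIdentity.
Variables (R : numFieldType) (a b : nat -> R) (n : nat).
Hypotheses (hA0 : is_A0 a) (hA2 : is_A2 a b).
Local Notation Q := {poly %/ ('X^(n.+1) : {poly R})}.
Local Notation qp := (in_qpoly ('X^(n.+1) : {poly R})).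
Local Notation DQ := (@thetaQ R n \+ @thetaQ R n).
Local Notation A := (qseries n a).
Local Notation Y := (1 - 2 * A).
Local Notation W := (\sum_(i < n.+1) (2 * A) ^+ i).
Local Notation binomC := (fun i => ('C(3 * i + 1, i))%:R : R).
Local Notation binomS := (fun i => (binom_geom3 i)%:R : R).

Lemma coef0_A : A`_0 = 0.
Proof. by rewrite coef_qseries //; case: hA0. Qed.

Lemma WY : W * Y = 1.
Proof.
have nil : (2 * A) ^+ n.+1 = 0 by apply: qpoly_nilpotent; rewrite coef0_qM coef0_A mulr0.
by rewrite mulrC -opprB mulNr -subrX1 nil sub0r opprK.
Qed.

Lemma X_rel : 'qX * (3 - Y) ^+ 3 = 4 * (1 - Y).
Proof.
have hX : 'qX * (1 + A) ^+ 3 = A.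
  transitivity (qp ('X * (1 + trunc_ps a n) ^+ 3)); first by rewrite /qseries /qpolyX; ring.
  exact: eq_modX_in_qpoly (hA0.2 n).
by transitivity (8 * ('qX * (1 + A) ^+ 3)); [ring | rewrite hX; ring].
Qed.

Lemma B_rel : Y ^+ 9 * qseries n b =
  A * (1 + A) ^+ 6 * (1 + 36 * A + 135 * A ^+ 2 + 19 * A ^+ 3).
Proof.
transitivity (qp ((1 - 2%:R * trunc_ps a n) ^+ 9 * trunc_ps b n)).
  by rewrite /qseries; ring.
by rewrite (eq_modX_in_qpoly (@hA2 n)) /qseries; ring.
Qed.

Lemma lreg8 : GRing.lreg (8 : Q).
Proof. by apply: qpoly_lreg; rewrite coef0_qnat pnatr_eq0. Qed.

Lemma coef0_Y : Y`_0 = 1.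
Proof. by rewrite coef_qB coef0_qM (coef0_qnat 1) coef0_qnat coef0_A mulr0 subr0. Qed.

Lemma lreg3Y : GRing.lreg (3 - Y).
Proof.
apply: qpoly_lreg; rewrite coef_qB coef0_qnat coef0_Y.
by rewrite (_ : 3 - 1 = 2%:R :> R) ?pnatr_eq0 //; ring.
Qed.

Lemma coef0_W : W`_0 = 1.
Proof.
have : (W * Y)`_0 = (1 : Q)`_0 by rewrite WY.
by rewrite coef0_qM (coef0_qnat 1) coef0_Y mulr1.
Qed.

Lemma coef0_gfU : (gfU Y W)`_0 = 4.
Proof. by rewrite /gfU coef0_qM coef0_W coef0_qX coef_qB coef0_Y coef0_qnat; ring. Qed.

Lemma gfU_binom : gfU Y W = 4 * qseries n binomC.
Proof.
apply/eqP; rewrite -subr_eq0; apply/eqP; apply: odeU_eq0.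
  rewrite (odeU_lin (@DQ_mul R n) 'qX 4 (gfU Y W) (qseries n binomC)).
  by rewrite (odeU_gfU (@DQ_mul R n) WY X_rel (@DQ_qX R n) lreg8 lreg3Y) odeU_binom mulr0 subr0.
by rewrite coef_qB coef0_gfU coef_qnatM coef_qseries // mulr1 subrr.
Qed.

Lemma gfV_binom : gfV Y W = 4 * qseries n binomS.
Proof.
apply/eqP; rewrite -subr_eq0; apply/eqP; apply: odeV_eq0.
  rewrite -[X in odeV _ _ _ X](subrr (gfU Y W)) {2}gfU_binom.
  rewrite (odeV_lin (@DQ_mul R n) 'qX 4 (gfV Y W) (qseries n binomS) (gfU Y W)).
  by rewrite (odeV_gfV (@DQ_mul R n) WY X_rel (@DQ_qX R n) lreg8 lreg3Y) odeV_binom mulr0 subr0.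
rewrite coef_qB /gfV coef0_qM coef0_gfU coef0_W coef_qnatM coef_qseries //.
by rewrite /binom_geom3 binom_geom0 !mulr1 subrr.
Qed.

Lemma A2_theta :
  (1 - Y) * (3 - Y) ^+ 6 * (8 + 144 * (1 - Y) + 270 * (1 - Y) ^+ 2 + 19 * (1 - Y) ^+ 3)
  * W ^+ 9 = 1024 * qseries n b.
Proof.
transitivity
  (1024 * (A * (1 + A) ^+ 6 * (1 + 36 * A + 135 * A ^+ 2 + 19 * A ^+ 3)) * W ^+ 9).
  by ring.
rewrite -B_rel; transitivity (1024 * qseries n b * (W * Y) ^+ 9); first by ring.
by rewrite WY expr1n mulr1.
Qed.

Lemma coef_A2 : 640 * b n =
  (510 + 1721 * n%:R + 2057 * n%:R ^+ 2 + 1014 * n%:R ^+ 3 + 168 * n%:R ^+ 4) * binomC n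
  - (510 + 1395 * n%:R + 1260 * n%:R ^+ 2 + 375 * n%:R ^+ 3) * binomS n.
Proof.
have := theta_identity_eigen (@DQ_mul R n) WY X_rel (@DQ_qX R n) lreg8 (phi := fun z : Q => z`_n)
  (fun z1 z2 => coef_qD z1 z2 n) (fun z => coef_qN z n)
  (fun z => etrans (coef_DQ z n) (mulrC _ _)) (fun c z => coef_qnatM c z n).
cbv beta; rewrite A2_theta gfU_binom gfV_binom !coef_qnatM !coef_qseries // => h.
apply: (mulfI (_ : 64 != 0)); first by rewrite pnatr_eq0.
transitivity (40 * (1024 * b n)); first by ring.
by rewrite h natrM; ring.
Qed.

End CoefficientIdentity.

Theorem proposition7 (R : numFieldType) (a b : nat -> R) :
  is_A0 a -> is_A2 a b ->
  forall n : nat, (0 < n)%N ->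
    b n = (n.+1)%:R / 128%:R * ('C(3 * n + 1, n))%:R *
          ((168%:R * n%:R ^+ 3 + 846%:R * n%:R ^+ 2 + 1211%:R * n%:R + 510%:R) / 5%:R
           - 3%:R * (n.+1)%:R * (25%:R * n%:R + 34%:R)
             * hyp2F1_negint 1 n (2%:R * n%:R + 2%:R) (- 2%:R)).
Proof.
move=> hA0 hA2 n _.
apply: (mulfI (_ : 640 != 0)); first by rewrite pnatr_eq0.
by rewrite (coef_A2 n hA0 hA2) -hyp2F1_binom; field.
Qed.
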